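(* Let $q$ be a prime power and let $n\ge 3$ be an odd integer. Let $f(x)$ be a SCRIM polynomial of degree $n$ over $\mathbb{F}_{q^2}$. Then $\mathrm{ord}(f(x))\in D_n$. Moreover, if $\alpha\in\mathbb{F}_{q^{2n}}$ is a root of $f(x)$, then $\alpha$ is a primitive $d$-th root of unity for some $d\in D_n$.
   Context: For $f(x)\in\mathbb{F}_{q^2}[x]$ of degree $m$ with $f(0)\neq0$, the reciprocal is $f^*(x)=x^m f(0)^{-1}f(1/x)$, the conjugate of $g(x)=\sum g_ix^i$ is $\overline{g(x)}=\sum g_i^q x^i$, and the conjugate-reciprocal is $f^\dagger(x)=\overline{f^*(x)}$. A polynomial $f$ with $f(0)\ne 0$ is SCRIM if $f=f^\dagger$ and $f$ is irreducible and monic. The order $\mathrm{ord}(f(x))$ of a polynomial with $f(0)\neq0$ is the smallest positive integer $s$ such that $f(x)$ divides $x^s-1$. $D_n$ denotes the set of all positive divisors of $q^n+1$ that do not divide $q^k+1$ for any integer $0\le k<n$. *)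

From HB Require Import structures.
From mathcomp Require Import all_boot all_order all_algebra all_field.
Set Implicit Arguments. Unset Strict Implicit. Unset Printing Implicit Defensive.
Import GRing.Theory.
Local Open Scope ring_scope.

Section Defs.
Variable F : fieldType.

(* reciprocal f^*(x) = x^m f(0)^{-1} f(1/x), where m = deg f = (size f).-1 *)
Definition recip (f : {poly F}) : {poly F} :=
  (f`_0)^-1 *: \poly_(i < size f) f`_((size f).-1 - i).

Definition pconj (q : nat) (g : {poly F}) : {poly F} := map_poly (fun a => a ^+ q) g.

Definition conj_recip (q : nat) (f : {poly F}) : {poly F} := pconj q (recip f).

Definition SCRIM (q : nat) (f : {poly F}) : Prop :=
  [/\ f`_0 != 0, f = conj_recip q f, irreducible_poly f & f \is monic].

Definition is_poly_order (f : {poly F}) (s : nat) : Prop :=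
  [/\ (0 < s)%N, f %| 'X^s - 1 &
      forall t : nat, (0 < t)%N -> f %| 'X^t - 1 -> (s <= t)%N].
End Defs.

Definition in_D (q n d : nat) : Prop :=
  [/\ (0 < d)%N, (d %| q ^ n + 1)%N &
      forall k : nat, (k < n)%N -> ~~ (d %| q ^ k + 1)%N].

From HB Require Import structures.
From mathcomp Require Import all_boot all_order all_algebra all_field.
From mathcomp Require Import closed_field zify.
Set Implicit Arguments. Unset Strict Implicit. Unset Printing Implicit Defensive.
Import GRing.Theory.
Local Open Scope ring_scope.

(* Let Q = q^2 = #|F|. The roots of the irreducible f of degree n are its n
   distinct conjugates a^(Q^j), j < n, so a^(Q^n) = a and a^(Q^j) <> a for
   0 < j < n. The SCRIM condition makes sigma x := x^-q send roots to roots;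
   as sigma^2 is x |-> x^Q, a has an odd sigma-period dividing 2n, hence
   sigma^n fixes a, i.e. a^(q^n + 1) = 1. If the order d of a divided q^k + 1
   for some 0 < k < n, then a^(Q^k) = a, a contradiction; k = 0 reduces to
   k = 1 by parity. Finally the irreducible f divides x^t - 1 exactly when
   its root a satisfies a^t = 1, so the order of f is d as well. *)

Section PcharExpr.
Variables (R : comNzSemiRingType) (N : nat).

Definition pchar_expr of [pchar R].-nat N := fun x : R => x ^+ N.

Hypothesis RN : [pchar R].-nat N.

Lemma pchar_expr_is_nmod_morphism : nmod_morphism (pchar_expr RN).
Proof.
have N_gt0 : (0 < N)%N by case/andP: RN.
split=> [|x y]; rewrite /pchar_expr; last exact: exprDn_pchar.
by rewrite expr0n eqn0Ngt N_gt0.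
Qed.

Lemma pchar_expr_is_monoid_morphism : monoid_morphism (pchar_expr RN).
Proof. by split=> [|x y]; rewrite /pchar_expr ?expr1n ?exprMn. Qed.

HB.instance Definition _ :=
  GRing.isNmodMorphism.Build R R (pchar_expr RN) pchar_expr_is_nmod_morphism.
HB.instance Definition _ :=
  GRing.isMonoidMorphism.Build R R (pchar_expr RN) pchar_expr_is_monoid_morphism.

Lemma pchar_exprE x : pchar_expr RN x = x ^+ N.
Proof. by []. Qed.

End PcharExpr.

Section FiniteSubfield.
Variables (F : finFieldType) (L : fieldType) (phi : {rmorphism F -> L}).

Lemma finField_fixed_image (x : L) : x ^+ #|F| = x -> exists c, phi c = x.
Proof.
move=> x_fixed.
have : root (map_poly phi ('X^#|F| - 'X)) x.
  by rewrite rmorphB /= map_polyXn map_polyX rootE !hornerE x_fixed subrr.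
rewrite finField_genPoly rmorph_prod /=.
under eq_bigr do rewrite map_polyXsubC.
rewrite -(big_map phi xpredT (fun z => 'X - z%:P)) root_prod_XsubC.
by case/mapP=> c _ ->; exists c.
Qed.

Lemma finField_fixed_poly_image (g : {poly L}) :
  (forall i, g`_i ^+ #|F| = g`_i) -> exists h : {poly F}, g = map_poly phi h.
Proof.
move=> g_fixed.
have pre i : {c | phi c == g`_i}.
  by apply: sigW; have [c <-] := finField_fixed_image (g_fixed i); exists c.
exists (\poly_(i < size g) sval (pre i)); apply/polyP=> i.
rewrite coef_map coef_poly; case: ltnP => [_ | gi]; first by case: (pre i) => c /= /eqP.
by rewrite nth_default // -(rmorph0 phi).
Qed.

End FiniteSubfield.

Lemma irredp_dvdp_map_root (F R : fieldType) (phi : {rmorphism F -> R})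
    (f g : {poly F}) x :
  irreducible_poly f -> root (map_poly phi f) x -> root (map_poly phi g) x ->
  f %| g.
Proof.
move=> [f_gt1 f_irr] fx gx.
have f_neq0 : f != 0 by rewrite -size_poly_gt0 ltnW.
have h_neq0 : gcdp f g != 0 by rewrite gcdp_eq0 negb_and f_neq0.
have hx : root (map_poly phi (gcdp f g)) x by rewrite gcdp_map root_gcd fx.
have h_gt1 : (1 < size (gcdp f g))%N.
  by rewrite -(size_map_poly phi) (root_size_gt1 _ hx) // map_poly_eq0.
have /f_irr hf : gcdp f g %| f by rewrite dvdp_gcdl.
by rewrite -(eqp_dvdl _ (hf _)) ?dvdp_gcdr // neq_ltn h_gt1 orbT.
Qed.

Lemma recip_map (F R : fieldType) (phi : {rmorphism F -> R}) (f : {poly F}) :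
  map_poly phi (recip f) = recip (map_poly phi f).
Proof.
rewrite /recip map_polyZ size_map_poly coef_map fmorphV; congr (_ *: _).
apply/polyP => i; rewrite coef_map !coef_poly; case: ltnP => i_lt.
  by rewrite ifT //; lia.
by rewrite -(rmorph0 phi).
Qed.

Lemma root_recip (R : fieldType) (g : {poly R}) x :
  x != 0 -> root g x -> root (recip g) x^-1.
Proof.
move=> x_neq0 gx; rewrite /recip rootE hornerZ horner_poly mulf_eq0.
apply/orP; right; rewrite -(mulIr_eq0 _ (mulIf (expf_neq0 (size g).-1 x_neq0))).
rewrite mulr_suml [X in X == 0](_ : _ = g.[x]) -?rootE //.
rewrite horner_coef (reindex_inj rev_ord_inj) /=; apply: eq_bigr => i _.
have rev_idx s (j : 'I_s) : (s.-1 - (s - j.+1) = j)%N /\ s.-1 = (s - j.+1 + j)%N.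
  by have := ltn_ord j; lia.
have [-> ->] := rev_idx _ i.
by rewrite exprD exprVn -mulrA mulKf ?expf_neq0.
Qed.

Lemma root_conj_recip (F L : fieldType) (phi : {rmorphism F -> L}) q
    (f : {poly F}) x (Lq : [pchar L].-nat q) :
  f = conj_recip q f -> x != 0 -> root (map_poly phi f) x ->
  root (map_poly phi f) (x ^+ q)^-1.
Proof.
move=> f_cr x_neq0 fx.
have -> : map_poly phi f = map_poly (pchar_expr Lq) (recip (map_poly phi f)).
  rewrite {1}f_cr /conj_recip /pconj -recip_map -!map_poly_comp.
  by apply: eq_map_poly => c /=; rewrite rmorphXn.
by rewrite rootE -exprVn -pchar_exprE horner_map (rootP (root_recip x_neq0 fx)) rmorph0.
Qed.

Section IterPeriod.
Variables (T : Type) (g : T -> T) (x : T).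

Lemma iter_fix_mul m c : iter m g x = x -> iter (c * m) g x = x.
Proof. by move=> gm; elim: c => [|c IHc] //; rewrite mulSn iterD IHc. Qed.

Lemma iter_fix_gcdn m n :
  (0 < m)%N -> iter m g x = x -> iter n g x = x -> iter (gcdn m n) g x = x.
Proof.
move=> m_gt0 gm gn; have [u v uv _] := egcdnP n m_gt0.
by have := iter_fix_mul u gm; rewrite uv addnC iterD iter_fix_mul.
Qed.

(* 2n - 1 + 2i is an odd period of g, and its gcd with the period 2n divides n. *)
Lemma iter_fix_odd n i :
  odd n -> iter (2 * n) g x = x -> iter (2 * i) g x = g x -> iter n g x = x.
Proof.
move=> n_odd g2n g2i; have n_gt0 := odd_gt0 n_odd.
set m := ((2 * n).-1 + 2 * i)%N.
have m_odd : odd m.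
  have -> : m = (2 * (n.-1 + i)).+1 by rewrite /m; lia.
  by rewrite /= oddM.
have gm : iter m g x = x by rewrite iterD g2i -iterSr prednK ?muln_gt0.
have := iter_fix_gcdn (odd_gt0 m_odd) gm g2n; rewrite Gauss_gcdr ?coprimen2 //.
by move=> g_gcd; have /dvdnP[c ->] := dvdn_gcdr m n; apply: iter_fix_mul.
Qed.

End IterPeriod.

Lemma iter_expr_inv (R : fieldType) q j (x : R) :
  iter j (fun y => (y ^+ q)^-1) x =
  if odd j then (x ^+ (q ^ j))^-1 else x ^+ (q ^ j).
Proof.
elim: j => [|j IHj]; first by rewrite expr1.
rewrite iterS IHj /=; case: (odd j) => /=; last by rewrite -exprM expnSr.
by rewrite exprVn invrK -exprM expnSr.
Qed.

Section FrobeniusOrbit.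
Variables (F : finFieldType) (L : fieldType) (phi : {rmorphism F -> L}).
Hypothesis L_card : [pchar L].-nat #|F|.
Variables (f : {poly F}) (a : L).
Hypotheses (f_irr : irreducible_poly f) (f_a : root (map_poly phi f) a).

Local Notation fL := (map_poly phi f).
Local Notation n := (size f).-1.
Local Notation orbit m := (mkseq (fun j => a ^+ (#|F| ^ j)) m).

Lemma fL_neq0 : fL != 0.
Proof. by rewrite map_poly_eq0 -size_poly_gt0 ltnW //; case: f_irr. Qed.

Lemma size_fL : size fL = n.+1.
Proof. by rewrite size_map_poly prednK // ltnW //; case: f_irr. Qed.

Lemma root_expr_card x : root fL x -> root fL (x ^+ #|F|).
Proof.
have fixed : map_poly (pchar_expr L_card) fL = fL.
  rewrite -map_poly_comp; apply: eq_map_poly => c /=.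
  by rewrite pchar_exprE -rmorphXn expf_card.
by move=> /rootP fx; rewrite rootE -pchar_exprE -fixed horner_map fx rmorph0.
Qed.

Lemma root_orbit j : root fL (a ^+ (#|F| ^ j)).
Proof.
elim: j => [|j IHj]; first by rewrite expr1.
by rewrite expnSr exprM root_expr_card.
Qed.

Lemma orbit_shift i j :
  (i <= j)%N -> a ^+ (#|F| ^ i) = a ^+ (#|F| ^ j) -> a ^+ (#|F| ^ (j - i)) = a.
Proof.
move=> le_ij eq_ij; have L_cardX : [pchar L].-nat (#|F| ^ i)%N by rewrite pnatX L_card.
apply: (fmorph_inj (pchar_expr L_cardX)); rewrite /= !pchar_exprE -exprM -expnD.
by rewrite subnK // eq_ij.
Qed.

Lemma uniq_orbit m :
  (forall j, (0 < j < m)%N -> a ^+ (#|F| ^ j) != a) -> uniq (orbit m).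
Proof.
move=> aperiodic; apply: contraT => /(uniqPn 0)[i [j [lt_ij]]].
rewrite size_mkseq => lt_jm; rewrite !nth_mkseq ?(ltn_trans lt_ij) //.
move/(orbit_shift (ltnW lt_ij)) => period.
have := aperiodic (j - i)%N; rewrite period eqxx subn_gt0 lt_ij; apply.
exact: leq_ltn_trans (leq_subr _ _) lt_jm.
Qed.

Lemma size_uniq_orbit m : uniq (orbit m) -> (m <= n)%N.
Proof.
move=> uniq_m; rewrite -ltnS -size_fL.
have := max_poly_roots fL_neq0 _ uniq_m; rewrite size_mkseq; apply.
by apply/allP => _ /mapP[j _ ->]; apply: root_orbit.
Qed.

Lemma orbit_period_exists : exists m, (0 < m)%N && (a ^+ (#|F| ^ m) == a).
Proof.
have : ~~ uniq (orbit n.+1) by apply/negP => /size_uniq_orbit; rewrite ltnn.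
case/(uniqPn 0) => i [j [lt_ij]]; rewrite size_mkseq => lt_jn.
rewrite !nth_mkseq ?(ltn_trans lt_ij) // => /(orbit_shift (ltnW lt_ij)) period.
by exists (j - i)%N; rewrite subn_gt0 lt_ij period eqxx.
Qed.

(* The orbit polynomial is Frobenius-invariant, so it is defined over F and
   is a multiple of the irreducible f. *)
Lemma size_orbit_period m :
  (0 < m)%N -> a ^+ (#|F| ^ m) = a -> (n <= m)%N.
Proof.
case: m => // m _ period.
pose g := \prod_(j < m.+1) ('X - (a ^+ (#|F| ^ j))%:P).
have g_fixed : map_poly (pchar_expr L_card) g = g.
  rewrite rmorph_prod /=.
  under eq_bigr do rewrite map_polyXsubC /= pchar_exprE -exprM -expnSr.
  by rewrite /g big_ord_recr big_ord_recl /= period expn0 expr1 mulrC.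
have [h gh] : exists h, g = map_poly phi h.
  by apply: finField_fixed_poly_image => i; rewrite -{2}g_fixed coef_map.
have g_monic : g \is monic by apply: monic_prod_XsubC.
have h_neq0 : h != 0 by rewrite -(map_poly_eq0 phi) -gh monic_neq0.
have g_a : root g a.
  by rewrite rootE horner_prod (bigD1 ord0) //= hornerXsubC expr1 subrr mul0r.
have f_dvd_h : f %| h by apply: (irredp_dvdp_map_root f_irr f_a); rewrite -gh.
have size_h : size h = m.+2.
  rewrite -(size_map_poly phi) -gh size_prod_XsubC.
  by rewrite /index_enum -enumT -cardT card_ord.
by have := dvdp_leq h_neq0 f_dvd_h; rewrite size_h; case: (size f).
Qed.

Lemma frobenius_orbit_period :
  a ^+ (#|F| ^ n) = a /\ forall j, (0 < j < n)%N -> a ^+ (#|F| ^ j) != a.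
Proof.
have [m /andP[m_gt0 /eqP period] minimal] := ex_minnP orbit_period_exists.
have aperiodic j : (0 < j < m)%N -> a ^+ (#|F| ^ j) != a.
  case/andP=> j_gt0 lt_jm; apply/negP => /eqP period_j.
  by have := minimal j; rewrite j_gt0 period_j eqxx leqNgt lt_jm => /(_ isT).
suff -> : n = m by [].
by apply/eqP; rewrite eqn_leq size_orbit_period // size_uniq_orbit // uniq_orbit.
Qed.

Lemma root_in_orbit x :
  root fL x -> exists2 j, (j < n)%N & x = a ^+ (#|F| ^ j).
Proof.
move=> fx; have [_ /uniq_orbit uniq_n] := frobenius_orbit_period.
have : x \in orbit n.
  apply: contraT => x_out.
  have all_roots : all (root fL) (x :: orbit n).
    by rewrite /= fx; apply/allP => _ /mapP[j _ ->]; apply: root_orbit.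
  have := max_poly_roots fL_neq0 all_roots.
  by rewrite /= x_out uniq_n size_mkseq size_fL ltnn => /(_ isT).
by case/mapP => j; rewrite mem_iota add0n => /andP[_ lt_jn] ->; exists j.
Qed.

End FrobeniusOrbit.

Lemma is_poly_order_prim_root (F R : fieldType) (phi : {rmorphism F -> R})
    (f : {poly F}) a d :
  irreducible_poly f -> root (map_poly phi f) a -> d.-primitive_root a ->
  is_poly_order f d.
Proof.
move=> f_irr f_a prim.
have map_Xn1 t : map_poly phi ('X^t - 1) = 'X^t - 1.
  by rewrite rmorphB /= map_polyXn rmorph1.
have root_Xn1 t : root ('X^t - 1) a = (a ^+ t == 1).
  by rewrite rootE !hornerE subr_eq0.
split; first exact: prim_order_gt0 prim.
  by apply: (irredp_dvdp_map_root f_irr f_a); rewrite map_Xn1 root_Xn1 prim_expr_order.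
move=> t t_gt0 f_dvd; apply: dvdn_leq t_gt0 _.
by rewrite (prim_order_dvd prim) -root_Xn1 -map_Xn1 (root_dvdp _ f_a) ?dvdp_map.
Qed.

Lemma dvdn2_expn_add1 d q n :
  (0 < n)%N -> (d %| 2)%N -> (d %| q ^ n + 1)%N -> (d %| q + 1)%N.
Proof.
move=> n_gt0 d2; have : (d <= 2)%N by apply: dvdn_leq.
case: d d2 => [|[|[|]]] // _ _.
by rewrite !dvdn2 !oddD oddX eqn0Ngt n_gt0.
Qed.

Section SCRIMRoot.
Variables (F : finFieldType) (L : fieldType) (phi : {rmorphism F -> L}) (q : nat).
Hypotheses (F_card : #|F| = (q ^ 2)%N) (L_q : [pchar L].-nat q).
Variables (f : {poly F}) (a : L).
Hypotheses (f_scrim : SCRIM q f) (f_a : root (map_poly phi f) a).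
Local Notation n := (size f).-1.
Hypothesis n_odd : odd n.

Let L_card : [pchar L].-nat #|F|.
Proof. by rewrite F_card pnatX L_q. Qed.

Let f_irr : irreducible_poly f.
Proof. by case: f_scrim. Qed.

Lemma SCRIM_root_neq0 : a != 0.
Proof.
apply: contraTneq f_a => ->; rewrite rootE horner_coef0 coef_map fmorph_eq0.
by case: f_scrim.
Qed.

Lemma SCRIM_root_expn : a ^+ (q ^ n) = a^-1.
Proof.
have [_ f_cr _ _] := f_scrim.
have [period _] := frobenius_orbit_period L_card f_irr f_a.
have [i _ sigma_a] :=
  root_in_orbit L_card f_irr f_a (root_conj_recip L_q f_cr SCRIM_root_neq0 f_a).
pose sigma (x : L) := (x ^+ q)^-1.
have iter2 j : iter (2 * j) sigma a = a ^+ (#|F| ^ j).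
  by rewrite iter_expr_inv oddM /= F_card expnM.
have fix_n : iter n sigma a = a.
  by apply: (iter_fix_odd (i := i)); rewrite // iter2 // -sigma_a.
by rewrite -[in RHS]fix_n iter_expr_inv n_odd invrK.
Qed.

Lemma SCRIM_root_order d : (1 < n)%N -> d.-primitive_root a -> in_D q n d.
Proof.
move=> n_gt1 prim; have a_neq0 := SCRIM_root_neq0.
have [_ aperiodic] := frobenius_orbit_period L_card f_irr f_a.
have inv_of_dvd k : (d %| q ^ k + 1)%N -> a ^+ (q ^ k) = a^-1.
  rewrite (prim_order_dvd prim) exprD expr1 => /eqP a_qk.
  by apply: (mulIf a_neq0); rewrite a_qk mulVf.
have not_dvd k : (0 < k < n)%N -> ~~ (d %| q ^ k + 1)%N.
  move=> /aperiodic; apply: contra => /inv_of_dvd a_qk.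
  have -> : (#|F| ^ k = q ^ k * q ^ k)%N.
    by rewrite F_card -expnM -expnD addnn -mul2n mulnC.
  by rewrite exprM a_qk exprVn a_qk invrK.
have d_dvd : (d %| q ^ n + 1)%N.
  by rewrite (prim_order_dvd prim) exprD SCRIM_root_expn expr1 mulVf.
split=> [|//|[_ | k lt_kn]]; first exact: prim_order_gt0 prim; last exact: not_dvd.
have := not_dvd 1%N; rewrite n_gt1 => /(_ isT); apply: contra => d2.
by rewrite expn1 (dvdn2_expn_add1 (ltnW n_gt1) d2 d_dvd).
Qed.

Lemma SCRIM_root_primitive :
  (1 < n)%N -> exists d, in_D q n d /\ d.-primitive_root a.
Proof.
move=> n_gt1; have a_neq0 := SCRIM_root_neq0.
have a_qn1 : a ^+ (q ^ n).+1 = 1 by rewrite -addn1 exprD SCRIM_root_expn expr1 mulVf.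
have [d prim _] := prim_order_exists (ltn0Sn _) a_qn1.
by exists d; split; first exact: SCRIM_root_order.
Qed.

End SCRIMRoot.

Theorem mainTheorem5 (q n : nat) (F : finFieldType)
    (Hq : exists p k : nat, [/\ prime p, (0 < k)%N & q = (p ^ k)%N])
    (HF : #|F| = (q ^ 2)%N)
    (Hn : (3 <= n)%N) (Hodd : odd n)
    (f : {poly F}) (Hdeg : size f = n.+1) (Hf : SCRIM q f) :
  (exists s : nat, is_poly_order f s /\ in_D q n s) /\
  (forall (L : finFieldType) (iota : {rmorphism F -> L}) (alpha : L),
      #|L| = (q ^ (2 * n))%N ->
      root (map_poly iota f) alpha ->
      exists d : nat, in_D q n d /\ d.-primitive_root alpha).
Proof.
have [p [k [p_prime _ q_pk]]] := Hq.
have F_char : p \in [pchar F].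
  by apply: (card_finPcharP _ p_prime); rewrite HF q_pk -expnM.
have L_q (L : fieldType) (iota : {rmorphism F -> L}) : [pchar L].-nat q.
  by rewrite q_pk pnatX (eq_pnat _ (pcharf_eq (rmorph_pchar iota F_char))) pnat_id.
have n_def : n = (size f).-1 by rewrite Hdeg.
have n_gt1 : (1 < n)%N by apply: leq_trans Hn.
rewrite n_def in Hodd n_gt1 *.
have primitive L iota alpha := @SCRIM_root_primitive F L iota q HF (L_q L iota) f alpha Hf.
split; last by move=> L iota alpha _ /primitive; apply.
have [K [FtoK _]] := countable_algebraic_closure F.
have [alpha f_alpha] : exists alpha, root (map_poly FtoK f) alpha.
  by apply/closed_rootP; rewrite size_map_poly Hdeg eqSS -lt0n (leq_trans _ Hn).
have [d [d_D prim]] := primitive _ _ _ f_alpha Hodd n_gt1.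
have [_ _ f_irr _] := Hf.
by exists d; split; first exact: is_poly_order_prim_root f_irr f_alpha prim.
Qed.
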